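(* Let $\Delta\subseteq\mathbb{R}^d$ be a Delzant polytope. Then $\Upsilon(\Delta)$ equals the facet width of $\Delta$.
   Context: A Delzant polytope is a full-dimensional polytope $\Delta\subseteq\mathbb{R}^d$ whose normal fan consists of unimodular cones, i.e. at each vertex the primitive inner normals of the incident facets form a basis of $(\mathbb{Z}^d)^*$. Write the facets as $\{x\in\Delta:\langle u_k,x\rangle=-\phi_k\}$, $k=1,\dots,m$, with $u_k\in(\mathbb{Z}^d)^*$ primitive inner facet normals and $\phi_k\in\mathbb{R}$. $\Upsilon(\Delta)$ is the minimum of all positive values $\sum_k a_k\phi_k$ where $a_k$ are nonnegative integers with $\sum_k a_ku_k=0$. For $u\ne0$, $\mathrm{width}_u(\Delta)=\max_{x,y\in\Delta}|u(x)-u(y)|$; the facet width of $\Delta$ is $\min_k \mathrm{width}_{u_k}(\Delta)$ over the facet normals $u_k$. *)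

(* Polytopes in R^d are modelled over an arbitrary real
   (ordered) field R : realFieldType; points are row vectors 'rV[R]_d,
   integral dual vectors (facet normals) are row vectors 'rV[int]_d. *)
From HB Require Import structures.
From mathcomp Require Import all_boot all_order all_algebra.
Set Implicit Arguments. Unset Strict Implicit. Unset Printing Implicit Defensive.
Import Order.TTheory GRing.Theory Num.Theory.
Local Open Scope ring_scope.

Section Delzant.
Variable R : realFieldType.

Definition pair (d : nat) (u : 'rV[int]_d) (x : 'rV[R]_d) : R :=
  \sum_(i < d) (u 0 i)%:~R * x 0 i.

Variables (d m : nat) (u : 'I_m -> 'rV[int]_d) (phi : 'I_m -> R).

Definition in_poly (x : 'rV[R]_d) : Prop := forall k, - phi k <= pair (u k) x.

Definition active (x : 'rV[R]_d) (k : 'I_m) : Prop := pair (u k) x = - phi k.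

Definition is_vertex (v : 'rV[R]_d) : Prop :=
  in_poly v /\
  forall x y, in_poly x -> in_poly y -> x + y = v *+ 2 -> x = y.

Definition primitive (w : 'rV[int]_d) : Prop :=
  forall (n : int) (w' : 'rV[int]_d), w = n *: w' -> n = 1 \/ n = -1.

Definition active_normals_Zbasis (v : 'rV[R]_d) : Prop :=
  (forall c : 'I_m -> int, (forall k, ~ active v k -> c k = 0) ->
     \sum_(k < m) c k *: u k = 0 -> forall k, c k = 0) /\
  (forall w : 'rV[int]_d, exists c : 'I_m -> int,
     (forall k, ~ active v k -> c k = 0) /\ w = \sum_(k < m) c k *: u k).

Definition Delzant : Prop :=
  [/\
      exists M : R, forall x, in_poly x -> forall i, `|x 0 i| <= M,
      exists x : 'rV[R]_d, forall k, - phi k < pair (u k) x,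
      (* each k gives a facet, and distinct k give distinct facets
         (irredundant facet description) *)
      forall k, exists x : 'rV[R]_d,
        active x k /\ forall j, j != k -> - phi j < pair (u j) x,
      forall k, primitive (u k) &
      forall v, is_vertex v -> active_normals_Zbasis v].

Definition is_Upsilon (w : R) : Prop :=
  (exists a : 'I_m -> nat,
      \sum_(k < m) u k *+ a k = 0 /\ w = \sum_(k < m) (a k)%:R * phi k /\ 0 < w) /\
  (forall a : 'I_m -> nat, \sum_(k < m) u k *+ a k = 0 ->
      0 < \sum_(k < m) (a k)%:R * phi k -> w <= \sum_(k < m) (a k)%:R * phi k).

Definition is_width (z : 'rV[int]_d) (w : R) : Prop :=
  (exists x y, in_poly x /\ in_poly y /\ w = `|pair z x - pair z y|) /\
  (forall x y, in_poly x -> in_poly y -> `|pair z x - pair z y| <= w).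

Definition is_facet_width (w : R) : Prop :=
  (exists k, is_width (u k) w) /\
  (forall k w', is_width (u k) w' -> w <= w').

End Delzant.

(* For a facet normal u_k, run the simplex method over the basic points of Delta (points
   where the normals of the facets through them span the dual space, hence vertices).  It
   stops at a vertex v where -u_k is a nonnegative combination of the normals active at v,
   and by the Delzant condition the coefficients a_i are integers.  Then
   u_k + sum_i a_i u_i = 0 is a relation with value phi_k + sum_i a_i phi_i
   = max_Delta u_k + phi_k = width_{u_k}(Delta), so Upsilon(Delta) is at most the facet
   width.  Conversely, for any relation sum_i b_i u_i = 0 and any x in Delta,
   sum_i b_i phi_i = sum_i b_i (<u_i, x> + phi_i) is a sum of nonnegative terms; taking
   b_k >= 1 and x maximizing u_k bounds it below by width_{u_k}(Delta). *)

From HB Require Import structures.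
From mathcomp Require Import all_boot all_order all_algebra.
From mathcomp Require Import ring lra zify.
From Stdlib Require Import Classical.
Import Order.TTheory GRing.Theory Num.Theory.
Set Implicit Arguments. Unset Strict Implicit. Unset Printing Implicit Defensive.
Local Open Scope ring_scope.

Section Pairing.
Variables (R : realFieldType) (d : nat).
Implicit Types (w : 'rV[int]_d) (x y : 'rV[R]_d).

Lemma pairDr w x y : pair w (x + y) = pair w x + pair w y.
Proof. by rewrite /pair -big_split; apply: eq_bigr => i _; rewrite mxE mulrDr. Qed.

Lemma pairZr w (t : R) x : pair w (t *: x) = t * pair w x.
Proof. by rewrite /pair mulr_sumr; apply: eq_bigr => i _; rewrite mxE; ring. Qed.

Lemma pairBr w x y : pair w (x - y) = pair w x - pair w y.
Proof. by rewrite pairDr -scaleN1r pairZr mulN1r. Qed.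

Lemma pair0r w : pair w (0 : 'rV[R]_d) = 0.
Proof. by rewrite /pair big1 // => i _; rewrite mxE mulr0. Qed.

Lemma pair0l x : pair (0 : 'rV[int]_d) x = 0.
Proof. by rewrite /pair big1 // => i _; rewrite mxE mul0r. Qed.

Lemma pairDl w w' x : pair (w + w') x = pair w x + pair w' x.
Proof. by rewrite /pair -big_split; apply: eq_bigr => i _; rewrite mxE intrD mulrDl. Qed.

Lemma pairZl (n : int) w x : pair (n *: w) x = n%:~R * pair w x.
Proof. by rewrite /pair mulr_sumr; apply: eq_bigr => i _; rewrite mxE intrM; ring. Qed.

Lemma pairNl w x : pair (- w) x = - pair w x.
Proof. by rewrite -scaleN1r pairZl mulN1r. Qed.

Lemma pairMnl w (n : nat) x : pair (w *+ n) x = n%:R * pair w x.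
Proof. by rewrite -scaler_nat pairZl mulrz_nat. Qed.

Lemma pair_suml (I : Type) (r : seq I) (P : pred I) (F : I -> 'rV[int]_d) x :
  pair (\sum_(i <- r | P i) F i) x = \sum_(i <- r | P i) pair (F i) x.
Proof. exact: (big_morph (fun w => pair w x) (fun a b => pairDl a b x) (pair0l x)). Qed.

Lemma pair_int_row w (z : 'I_d -> int) :
  pair w (\row_s (z s)%:~R : 'rV[R]_d) = (\sum_s w 0 s * z s)%:~R.
Proof. by rewrite /pair rmorph_sum; apply: eq_bigr => i _; rewrite mxE rmorphM. Qed.

End Pairing.

Lemma exists_max_injective_key (R : realDomainType) (T : Type) (K : finType)
    (Q : T -> Prop) (key : T -> K) (f : T -> R) :
  (forall x y, Q x -> Q y -> key x = key y -> x = y) -> (exists x, Q x) ->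
  exists2 x, Q x & forall y, Q y -> f y <= f x.
Proof.
move=> key_inj [x0 Qx0].
have /fin_all_exists[W HW] : forall k, exists o : option T,
    if o is Some x then Q x /\ key x = k else ~ exists x, Q x /\ key x = k.
  move=> k; case: (classic (exists x, Q x /\ key x = k)) => [[x ?]|?].
    by exists (Some x).
  by exists None.
have W_key y : Q y -> W (key y) = Some y.
  move=> Qy; move: (HW (key y)); case: (W _) => [x [Qx /key_inj-> //]|[]].
  by exists y.
pose g k := if W k is Some x then f x else 0.
have Sx0 : isSome (W (key x0)) by rewrite W_key.
case: (@Order.TotalTheory.arg_maxP _ _ _ _ (fun k => isSome (W k)) g Sx0) => k.
case Wk: (W k) => [x|] // _ max_k.
have [Qx _] : Q x /\ key x = k by move: (HW k); rewrite Wk.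
exists x => // y Qy; have := max_k (key y); rewrite /g Wk W_key //; exact.
Qed.

Section Polytope.
Variables (R : realFieldType) (d m : nat) (u : 'I_m -> 'rV[int]_d) (phi : 'I_m -> R).
Local Notation in_poly := (in_poly u phi).
Implicit Types (x y z v : 'rV[R]_d) (a b : 'I_m -> nat).

Definition active_set x : {set 'I_m} := [set k | pair (u k) x == - phi k].

(* A basic feasible solution in the sense of linear programming. *)
Definition basic_point x :=
  in_poly x /\ forall y, (forall i, i \in active_set x -> pair (u i) y = 0) -> y = 0.

Lemma in_active_set x k : (k \in active_set x) = (pair (u k) x == - phi k).
Proof. by rewrite inE. Qed.

Lemma slack_ge0 x k : in_poly x -> 0 <= pair (u k) x + phi k.
Proof. by move=> /(_ k); rewrite -lerBlDr sub0r. Qed.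

Lemma basic_point_vertex x : basic_point x -> is_vertex u phi x.
Proof.
case=> Px orth; split => // y z Py Pz yz.
apply/eqP; rewrite -subr_eq0; apply/eqP/orth => i; rewrite in_active_set => /eqP xi.
have := congr1 (pair (u i)) yz; rewrite pairDr mulr2n pairDr xi.
by have := Py i; have := Pz i; rewrite pairBr; lra.
Qed.

Lemma basic_point_inj x y :
  basic_point x -> basic_point y -> active_set x = active_set y -> x = y.
Proof.
move=> [_ orth] [_ _] Exy; apply/eqP; rewrite -subr_eq0; apply/eqP/orth => i xi.
have yi : i \in active_set y by rewrite -Exy.
by rewrite !in_active_set in xi yi; rewrite pairBr (eqP xi) (eqP yi) subrr.
Qed.

Lemma pair_relation k a x : u k + \sum_i u i *+ a i = 0 ->
  pair (u k) x = - \sum_i (a i)%:R * pair (u i) x.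
Proof.
move=> /(congr1 (fun w => pair w x)); rewrite pair0l pairDl pair_suml => /eqP.
rewrite addr_eq0 => /eqP->; congr (- _); apply: eq_bigr => i _; exact: pairMnl.
Qed.

Lemma relation_ub k a x : in_poly x -> u k + \sum_i u i *+ a i = 0 ->
  pair (u k) x <= \sum_i (a i)%:R * phi i.
Proof.
move=> Px /(pair_relation x)->; rewrite -sumrN; apply: ler_sum => i _.
by rewrite -mulrN ler_wpM2l // lerNl Px.
Qed.

Lemma relation_active k a x : (forall i, i \notin active_set x -> a i = 0%N) ->
  u k + \sum_i u i *+ a i = 0 -> pair (u k) x = \sum_i (a i)%:R * phi i.
Proof.
move=> supp /(pair_relation x)->; rewrite -sumrN; apply: eq_bigr => i _.
have [xi|/supp->] := boolP (i \in active_set x); last by rewrite !mul0r oppr0.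
by rewrite in_active_set in xi; rewrite (eqP xi) mulrN opprK.
Qed.

Lemma relation_slack b x : \sum_i u i *+ b i = 0 ->
  \sum_i (b i)%:R * phi i = \sum_i (b i)%:R * (pair (u i) x + phi i).
Proof.
move=> /(congr1 (fun w => pair w x)); rewrite pair0l pair_suml => rel0.
under [RHS]eq_bigr do rewrite mulrDr; rewrite big_split /=.
rewrite [X in X + _](_ : _ = 0) ?add0r // -[RHS]rel0.
by apply: eq_bigr => i _; rewrite pairMnl.
Qed.

Lemma pair_combination_orth v j (c : 'I_m -> int) x :
  (forall k, k \notin active_set v -> c k = 0) ->
  (forall k, k \in active_set v -> k != j -> pair (u k) x = 0) ->
  pair (\sum_k c k *: u k) x = (c j)%:~R * pair (u j) x.
Proof.
move=> c_supp x_orth; rewrite pair_suml (bigD1 j) //= big1 ?addr0 ?pairZl // => k kj.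
rewrite pairZl; have [vk|/c_supp->] := boolP (k \in active_set v); last by rewrite mul0r.
by rewrite x_orth ?mulr0.
Qed.

Lemma is_width_unique (z : 'rV[int]_d) (w w' : R) :
  is_width u phi z w -> is_width u phi z w' -> w = w'.
Proof.
move=> [[x [y [Px [Py ->]]]] ub] [[x' [y' [Px' [Py' ->]]]] ub'].
by apply/le_anti; rewrite ub' // ub.
Qed.

Lemma relation_with_facet k a : u k + \sum_i u i *+ a i = 0 ->
  \sum_i u i *+ (a i + (i == k))%N = 0 /\
  \sum_i (a i + (i == k))%:R * phi i = phi k + \sum_i (a i)%:R * phi i.
Proof.
move=> rel; split.
  under eq_bigr do rewrite mulrnDr; rewrite big_split /= addrC -[RHS]rel.
  by congr (_ + _); rewrite (bigD1 k) //= eqxx big1 ?addr0 // => i /negbTE->.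
under eq_bigr do rewrite natrD mulrDl; rewrite big_split /= addrC.
congr (_ + _); rewrite (bigD1 k) //= eqxx mul1r big1 ?addr0 // => i /negbTE->.
by rewrite mul0r.
Qed.

Lemma relation_ge_width b k w : \sum_i u i *+ b i = 0 -> (0 < b k)%N ->
  is_width u phi (u k) w -> w <= \sum_i (b i)%:R * phi i.
Proof.
move=> rel bk [[x [y [Px [Py ->]]]] _].
have slack_le x' : in_poly x' -> pair (u k) x' + phi k <= \sum_i (b i)%:R * phi i.
  move=> Px'; rewrite (relation_slack x' rel) (bigD1 k) //=.
  have rest_ge0 : 0 <= \sum_(i | i != k) (b i)%:R * (pair (u i) x' + phi i).
    by apply: sumr_ge0 => i _; apply: mulr_ge0 => //; exact: slack_ge0.
  have bk1 : 1 <= (b k)%:R :> R by rewrite ler1n.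
  rewrite -[X in X <= _]mul1r; apply: le_trans (ler_wpM2r (slack_ge0 k Px') bk1) _.
  by rewrite lerDl.
rewrite ler_norml; have := slack_le x Px; have := slack_le y Py.
by have := Px k; have := Py k; lra.
Qed.

Lemma relation_ge_some_width (W : 'I_m -> R) b : (forall k, is_width u phi (u k) (W k)) ->
  \sum_i u i *+ b i = 0 -> 0 < \sum_i (b i)%:R * phi i ->
  exists k, W k <= \sum_i (b i)%:R * phi i.
Proof.
move=> W_width rel pos; have /existsP[k bk] : [exists k, 0 < b k]%N.
  apply: contraTT pos => /existsPn b0; rewrite big1 ?ltxx // => i _.
  by move: (b0 i); rewrite lt0n negbK => /eqP->; rewrite mul0r.
by exists k; apply: relation_ge_width rel bk (W_width k).
Qed.

Section Bounded.
Hypothesis bounded : exists M : R, forall x, in_poly x -> forall i, `|x 0 i| <= M.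

Lemma bounded_recession x y : in_poly x -> y != 0 -> exists l, pair (u l) y < 0.
Proof.
move=> Px y_neq0; case: bounded => M HM; apply: NNPP => no_l.
have y_ge0 l : 0 <= pair (u l) y by rewrite leNgt; apply/negP => ?; apply: no_l; exists l.
have [s ys] : exists s, y 0 s != 0.
  apply: NNPP => ys0; move/eqP: y_neq0; apply; apply/rowP => s; rewrite mxE.
  by apply/eqP; apply: NNPP => ?; apply: ys0; exists s; apply/negP.
have ys_gt0 : 0 < `|y 0 s| by rewrite normr_gt0.
pose t := (M + `|x 0 s| + 1) / `|y 0 s|.
have t_ge0 : 0 <= t.
  by apply: divr_ge0; [have := normr_ge0 (x 0 s); have := HM x Px s; lra | exact: ltW].
have Pt : in_poly (x + t *: y).
  move=> k; rewrite pairDr pairZr; have := Px k; have := mulr_ge0 t_ge0 (y_ge0 k); lra.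
have tys : `|t * y 0 s| = M + `|x 0 s| + 1.
  by rewrite normrM ger0_norm // /t divfK // normr_eq0.
have := HM _ Pt s; rewrite !mxE; have := lerB_normD (t * y 0 s) (x 0 s).
by rewrite tys addrC; lra.
Qed.

(* Move from x along y until the first facet l with <u_l, y> < 0 is hit. *)
Lemma ratio_test x y : in_poly x -> (exists l, pair (u l) y < 0) ->
  exists t, [/\ 0 <= t, in_poly (x + t *: y) & exists l,
    [/\ pair (u l) y < 0, l \in active_set (x + t *: y) & l \notin active_set x -> 0 < t]].
Proof.
move=> Px [l0 yl0].
pose f l := (pair (u l) x + phi l) / - pair (u l) y.
have [l yl min_l] := Order.TotalTheory.arg_minP f (P := fun l => pair (u l) y < 0) yl0.
have yl_neq0 : pair (u l) y != 0 by rewrite ltr0_neq0.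
have ft_ge0 : 0 <= f l by apply: divr_ge0; [exact: slack_ge0 | rewrite oppr_ge0 ltW].
exists (f l); split => //.
  move=> k; rewrite pairDr pairZr; have := slack_ge0 k Px.
  have [yk|yk] := ltrP (pair (u k) y) 0; last by have := mulr_ge0 ft_ge0 yk; lra.
  have := min_l k yk; rewrite /f [X in _ <= X]/= ler_pdivlMr ?oppr_gt0 //.
  by set T := _ / _; lra.
exists l; split => //.
  rewrite in_active_set pairDr pairZr /f invrN mulrN mulNr -mulrA mulVf // mulr1.
  by apply/eqP; lra.
move=> xl; apply: divr_gt0; last by rewrite oppr_gt0.
have := Px l; rewrite le_eqVlt eq_sym -in_active_set (negbTE xl) /=; lra.
Qed.

Lemma enlarge_active_set x : in_poly x -> ~ basic_point x ->
  exists2 x', in_poly x' & (#|active_set x| < #|active_set x'|)%N.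
Proof.
move=> Px not_basic.
have [y [y_orth y_neq0]] : exists y,
    (forall i, i \in active_set x -> pair (u i) y = 0) /\ y != 0.
  apply: NNPP => no_y; apply: not_basic; split => // y y_orth.
  by apply: NNPP => y_neq0; apply: no_y; exists y; split => //; apply/eqP.
have [t [_ Pt [l [yl l_act _]]]] := ratio_test Px (bounded_recession Px y_neq0).
exists (x + t *: y) => //; apply/proper_card/properP; split.
  apply/subsetP => i xi; rewrite in_active_set pairDr pairZr y_orth // mulr0 addr0.
  by rewrite -in_active_set.
by exists l => //; apply: contraTN yl => /y_orth->; rewrite ltxx.
Qed.

Lemma exists_basic_point x : in_poly x -> exists v, basic_point v.
Proof.
move: {2}(m - #|active_set x|)%N (leqnn (m - #|active_set x|)) => n.
elim: n x => [|n IH] x le_n Px; have [bx|not_bx] := classic (basic_point x);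
  try by exists x.
all: have [x' Px' lt_x'] := enlarge_active_set Px not_bx.
all: have := max_card (active_set x'); rewrite card_ord => le_x'.
- lia.
- by apply: (IH x') => //; lia.
Qed.

Lemma facets_nonempty : (0 < d)%N -> (0 < m)%N.
Proof.
move=> d_gt0; rewrite lt0n; apply/eqP => m0; case: bounded => M HM.
have Pc : in_poly (const_mx (`|M| + 1)) by move=> k; have : (k < 0)%N by rewrite -[0%N]m0.
have := HM _ Pc (Ordinal d_gt0); rewrite mxE ger0_norm; last first.
  by have := normr_ge0 M; lra.
by have := ler_norm M; lra.
Qed.

Section Delzant.
Hypothesis delzant : forall v, is_vertex u phi v -> active_normals_Zbasis u phi v.

Lemma basic_point_Zbasis v : basic_point v ->
  (forall c : 'I_m -> int, (forall k, k \notin active_set v -> c k = 0) ->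
     \sum_k c k *: u k = 0 -> forall k, c k = 0) /\
  (forall w : 'rV[int]_d, exists2 c : 'I_m -> int,
     (forall k, k \notin active_set v -> c k = 0) & w = \sum_k c k *: u k).
Proof.
move=> bv; have [indep span] := delzant (basic_point_vertex bv); split.
  move=> c c_supp; apply: indep => k k_inact; apply: c_supp.
  by rewrite in_active_set; apply/eqP.
move=> w; have [c [c_supp ->]] := span w; exists c => // k.
by rewrite in_active_set => /eqP k_act; apply: c_supp.
Qed.

Lemma dual_vector v j : basic_point v -> j \in active_set v ->
  exists y, forall i, i \in active_set v -> pair (u i) y = (i == j)%:R.
Proof.
move=> bv vj; have [indep span] := basic_point_Zbasis bv.
have /fin_all_exists2[C C_supp C_def] := fun s : 'I_d => span (delta_mx 0 s).
have dual i k : i \in active_set v -> \sum_s u i 0 s * C s k = (i == k)%:Z.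
  move=> vi; pose D k := \sum_s u i 0 s * C s k - (i == k)%:Z.
  suff /(_ k)/eqP : forall k, D k = 0 by rewrite subr_eq0 => /eqP.
  apply: indep => [k' vk'|].
    rewrite /D big1 => [|s _]; last by rewrite C_supp // mulr0.
    by have /negbTE-> : i != k' by apply: contraNneq vk' => <-.
  under eq_bigr do rewrite scalerBl; rewrite sumrB.
  have -> : \sum_k (\sum_s u i 0 s * C s k) *: u k = u i.
    rewrite [RHS]row_sum_delta; under eq_bigr do rewrite scaler_suml.
    rewrite exchange_big; apply: eq_bigr => s _; rewrite C_def scaler_sumr.
    by apply: eq_bigr => k' _; rewrite scalerA.
  rewrite (bigD1 i) //= eqxx scale1r big1 ?addr0 ?subrr // => l.
  by rewrite eq_sym => /negbTE->; rewrite scale0r.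
exists (\row_s (C s j)%:~R : 'rV[R]_d) => i vi.
by rewrite pair_int_row dual.
Qed.

(* One simplex step: if -u_k has a negative coordinate in the basis of active normals at v,
   leaving the facet j along the edge dual to u_j strictly increases u_k. *)
Lemma pivot k v (c : 'I_m -> int) j : basic_point v ->
  (forall i, i \notin active_set v -> c i = 0) -> - u k = \sum_i c i *: u i ->
  c j < 0 -> exists2 v', basic_point v' & pair (u k) v < pair (u k) v'.
Proof.
move=> bv c_supp c_def cj_lt0.
have vj : j \in active_set v by apply: contraTT cj_lt0 => /c_supp->; rewrite ltxx.
have [y y_dual] := dual_vector bv vj.
have y_orth i : i \in active_set v -> i != j -> pair (u i) y = 0.
  by move=> vi /negbTE ij; rewrite y_dual // ij.
have yk : pair (u k) y = - (c j)%:~R.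
  rewrite -[u k]opprK pairNl c_def (pair_combination_orth c_supp y_orth).
  by rewrite y_dual // eqxx mulr1.
have y_neq0 : y != 0.
  apply/eqP => y0; move: (y_dual j vj); rewrite y0 pair0r eqxx => /eqP.
  by rewrite eq_sym oner_eq0.
have [t [_ Pv' [l [yl v'l t_gt0]]]] := ratio_test bv.1 (bounded_recession bv.1 y_neq0).
have vl : l \notin active_set v.
  by apply: contraTN yl => vl; rewrite y_dual //; case: (l == j); rewrite /= ?ltr10 ?ltxx.
set v' := v + t *: y.
have v'_act i : i \in active_set v -> i != j -> i \in active_set v'.
  move=> vi ij; rewrite in_active_set pairDr pairZr y_orth // mulr0 addr0.
  by rewrite -in_active_set.
exists v'.
  split => // z z_orth.
  have [b b_supp b_def] := (basic_point_Zbasis bv).2 (u l).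
  have z_orth' i : i \in active_set v -> i != j -> pair (u i) z = 0.
    by move=> vi ij; apply/z_orth/v'_act.
  have bj : (b j)%:~R = pair (u l) y :> R.
    by rewrite b_def (pair_combination_orth b_supp y_orth) y_dual // eqxx mulr1.
  have zj : pair (u j) z = 0.
    have := z_orth l v'l; rewrite b_def (pair_combination_orth b_supp z_orth') bj.
    by move/eqP; rewrite mulf_eq0 (negbTE (ltr0_neq0 yl)) => /eqP.
  by apply: bv.2 => i vi; have [->|] := eqVneq i j; [exact: zj | exact: z_orth'].
rewrite /v' pairDr pairZr yk ltrDl; apply: mulr_gt0; first exact: t_gt0.
by rewrite oppr_gt0 ltrz0.
Qed.

(* Take the basic point maximizing u_k (there are finitely many, as a basic point is
   determined by its active set); by [pivot] the coordinates of -u_k are nonnegative there. *)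
Lemma exists_tight_relation k x : in_poly x ->
  exists2 a, u k + \sum_i u i *+ a i = 0 &
    exists2 v, in_poly v & pair (u k) v = \sum_i (a i)%:R * phi i.
Proof.
move=> Px; have [v0 bv0] := exists_basic_point Px.
have [v bv v_max] :=
  exists_max_injective_key (pair (u k)) basic_point_inj (ex_intro _ v0 bv0).
have [c c_supp c_def] := (basic_point_Zbasis bv).2 (- u k).
have c_ge0 i : 0 <= c i.
  rewrite leNgt; apply/negP => ci_lt0; have [v' bv' lt_v'] := pivot bv c_supp c_def ci_lt0.
  by move: (v_max v' bv'); rewrite leNgt lt_v'.
have rel : u k + \sum_i u i *+ `|c i|%N = 0.
  under eq_bigr => i _ do rewrite -scaler_nat natz gez0_abs ?c_ge0 //.
  by rewrite -c_def subrr.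
exists (fun i => `|c i|%N) => //; exists v; first exact: bv.1.
by apply: relation_active rel => i vi; rewrite c_supp.
Qed.

Lemma facet_width_relation k :
  (exists x, active u phi x k /\ forall j, j != k -> - phi j < pair (u j) x) ->
  exists2 a, u k + \sum_i u i *+ a i = 0 &
    is_width u phi (u k) (phi k + \sum_i (a i)%:R * phi i).
Proof.
move=> [y [yk y_int]].
have Py : in_poly y by move=> j; have [->|/y_int/ltW] := eqVneq j k; rewrite ?yk.
have [a rel [v Pv va]] := exists_tight_relation k Py.
exists a => //; split.
  exists v, y; do 2 split => //; rewrite va yk opprK ger0_norm; first by rewrite addrC.
  by rewrite -va slack_ge0.
move=> x x' Px Px'; rewrite ler_norml.
by have := relation_ub Px rel; have := relation_ub Px' rel; have := Px k; have := Px' k; lra.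
Qed.

End Delzant.
End Bounded.
End Polytope.

Theorem lemma3p8 (R : realFieldType) (d m : nat)
    (u : 'I_m -> 'rV[int]_d) (phi : 'I_m -> R) :
  (0 < d)%N -> Delzant u phi ->
  exists w : R, is_Upsilon u phi w /\ is_facet_width u phi w.
Proof.
move=> d_gt0 [bounded [x0 x0_int] facet_pt _ delzant].
have /fin_all_exists2[A A_rel A_width] :=
  fun k => facet_width_relation bounded delzant (facet_pt k).
pose W k := phi k + \sum_i (A k i)%:R * phi i.
have W_gt0 k : 0 < W k.
  have Px0 : in_poly u phi x0 by move=> j; exact: ltW.
  by have := relation_ub Px0 (A_rel k); have := x0_int k; rewrite /W; lra.
pose k0 : 'I_m := Ordinal (facets_nonempty bounded d_gt0).
have [k_min _ min_W] := Order.TotalTheory.arg_minP W (P := xpredT) (i0 := k0) isT.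
exists (W k_min); split; last first.
  split=> [|k w' w'_width]; first by exists k_min.
  by rewrite -(is_width_unique (A_width k) w'_width); exact: min_W.
split.
  have [rel val] := relation_with_facet phi (A_rel k_min).
  exists (fun i => A k_min i + (i == k_min))%N.
  by rewrite val; split => //; split => //; exact: W_gt0.
move=> b rel pos; have [k le_k] := relation_ge_some_width A_width rel pos.
exact: le_trans (min_W k isT) le_k.
Qed.
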